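(* Let $a,b\ge 0$ and $t\ge 1$ be integers and let $A_1,\dots,A_n,B_1,\dots,B_n$ be subsets of a universe such that $|A_i|\le a$, $|B_i|\le b$ and $A_i\cap B_i=\emptyset$ for every $i\in [n]$, and $B_i\neq B_j$ for all distinct $i,j\in [n]$. If $n> b!\,(t(1+2a)-1)^b$, then there is a subset $I\subseteq [n]$ of size $t$ such that $A_i\cap B_j=\emptyset$ for all $i,j\in I$. *)

From mathcomp Require Import all_boot all_order.
From mathcomp Require Export finmap.

(* Induction on b, as for the sunflower lemma; put k = t(1 + 2a) - 1. If some
   point x lies in more than b! k^b of the sets B_i, delete x from them and
   recurse on that subfamily (x is in no A_i of it, since A_i and B_i are
   disjoint). Otherwise every B_i meets at most (b + 1) b! k^b - 1 other B_j,
   and greedy selection in this sparse intersection graph gives t(1 + 2a)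
   pairwise disjoint B_i. For such a family, A_i meets at most a of the B_j,
   so every subfamily has a member i for which at most 2a indices j have
   A_i meeting B_j or A_j meeting B_i; greedy selection once more gives t
   members with all A_i and B_j disjoint. *)

From mathcomp Require Import all_boot all_order finmap zify.
From Stdlib Require Import Classical_Prop.
Open Scope fset_scope.

Lemma ex_subset_card {I : finType} {A : {set I}} {n} :
  n <= #|A| -> exists2 B : {set I}, B \subset A & #|B| = n.
Proof.
move/card_geqP => [s [uniq_s <- sA]]; exists [set x in s].
  by apply/subsetP => x; rewrite inE; apply: sA.
by rewrite cardsE; apply/card_uniqP.
Qed.

Section Degeneracy.
Context {I : finType} (R : rel I).

Definition neighbours (S : {set I}) (v : I) : {set I} :=
  [set j in S | (j != v) && (R v j || R j v)].

Definition degenerate (d : nat) (S : {set I}) : Prop :=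
  forall S' : {set I}, S' \subset S -> S' != set0 ->
    exists2 v, v \in S' & #|neighbours S' v| <= d.

Definition independent (J : {set I}) : Prop :=
  {in J &, forall i j, i != j -> ~~ R i j}.

Lemma degenerate_subset {d} {S S' : {set I}} :
  S' \subset S -> degenerate d S -> degenerate d S'.
Proof. by move=> sS'S dS S'' sS''S'; apply/dS/(subset_trans sS''S'). Qed.

Lemma degenerate_independent d (S : {set I}) :
  degenerate d S ->
  exists J : {set I}, [/\ J \subset S, independent J & #|S| <= #|J| * d.+1].
Proof.
have [n] := ubnP #|S|; elim: n S => // n IH S /ltnSE leSn dS.
have [->|S_neq0] := eqVneq S set0.
  by exists set0; split; rewrite ?sub0set ?cards0 // => i j; rewrite inE.
have [v vS degv] := dS S (subxx S) S_neq0.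
set S2 := S :\: (v |: neighbours S v).
have sS2S : S2 \subset S by apply: subsetDl.
have cardS : #|S| <= #|S2| + d.+1.
  rewrite -(cardsID (v |: neighbours S v) S) addnC leq_add2l.
  apply: leq_trans (subset_leq_card (subsetIr _ _)) _.
  by rewrite cardsU1 -add1n leq_add // leq_b1.
have vS2 : v \notin S2 by rewrite !inE eqxx.
have [|J [sJS2 indJ cardS2]] := IH S2 _ (degenerate_subset sS2S dS).
  by apply/(leq_trans _ leSn)/proper_card/properP; split=> //; exists v.
have vJ : v \notin J by apply: contra vS2; apply: (subsetP sJS2).
exists (v |: J); split.
- by rewrite subUset sub1set vS (subset_trans sJS2).
- have nadj_v j : j \in J -> j != v -> ~~ (R v j || R j v).
    by move=> /(subsetP sJS2); rewrite !inE => /andP[+ jS] jv; rewrite jS (negbTE jv).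
  move=> i j /setU1P[->|iJ] /setU1P[->|jJ]; rewrite ?eqxx //.
  + by rewrite eq_sym => /(nadj_v j jJ); case/norP.
  + by move=> /(nadj_v i iJ); case/norP.
  + exact: indJ.
- by rewrite cardsU1 vJ mulSn addnC; apply: leq_trans cardS _; rewrite leq_add2r.
Qed.

Lemma bounded_degree_degenerate d (S : {set I}) :
  {in S, forall v, #|neighbours S v| <= d} -> degenerate d S.
Proof.
move=> degS S' sS'S /set0Pn[v vS']; exists v => //.
apply: leq_trans (degS v (subsetP sS'S v vS')).
by apply/subset_leq_card/subsetP => j; rewrite !inE => /andP[/(subsetP sS'S) ->].
Qed.

Lemma out_degree_degenerate a (S : {set I}) :
  {in S, forall i, #|[set j in S | R i j]| <= a} -> degenerate (2 * a) S.
Proof.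
move=> outS S' sS'S /set0Pn[v0 v0S'].
pose indeg v := #|[set i in S' | R i v]|.
have outS' : {in S', forall i, #|[set j in S' | R i j]| <= a}.
  move=> i iS'; apply: leq_trans (outS i (subsetP sS'S i iS')).
  by apply/subset_leq_card/subsetP => j; rewrite !inE => /andP[/(subsetP sS'S) ->].
have sum_indeg : \sum_(v in S') indeg v = \sum_(i in S') #|[set j in S' | R i j]|.
  under eq_bigr do rewrite /indeg -sum1dep_card.
  under [RHS]eq_bigr do rewrite -sum1dep_card.
  rewrite (exchange_big_dep (mem S')) => [|i j _ /andP[] //].
  by apply: eq_bigr => i iS'; apply: eq_bigl => j; rewrite (iS' : i \in S').
have [v vS' min_v] := arg_minnP indeg v0S'.
exists v => //.
have indeg_v : indeg v <= a.
  rewrite -(@leq_pmul2l #|S'|) ?card_gt0; last by apply/set0Pn; exists v.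
  rewrite -!sum_nat_const (@leq_trans (\sum_(w in S') indeg w)) //.
    by apply: leq_sum => w; apply: min_v.
  by rewrite sum_indeg; apply: leq_sum.
apply: (@leq_trans #|[set j in S' | R v j] :|: [set i in S' | R i v]|).
  apply/subset_leq_card/subsetP => j.
  by rewrite !inE => /andP[jS /andP[_ /orP[]->]]; rewrite jS ?orbT.
rewrite mul2n -addnn.
exact: leq_trans (leq_card_setU _ _) (leq_add (outS' v vS') indeg_v).
Qed.

End Degeneracy.

Arguments degenerate_independent {I R d S}.
Arguments bounded_degree_degenerate {I R d S}.
Arguments out_degree_degenerate {I R a S}.

Lemma card_meets_le {T : choiceType} {I : finType} (S : {set I}) (F : I -> {fset T})
    (C : {fset T}) c :
  (forall x, #|[set j in S | x \in F j]| <= c) ->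
  #|[set j in S | C `&` F j != fset0]| <= #|` C| * c.
Proof.
move=> hc; pose U := (\bigcup_(x <- C) [set j in S | x \in F j])%SET.
have sub : [set j in S | C `&` F j != fset0] \subset U.
  apply/subsetP => j; rewrite inE => /andP[jS /fset0Pn[x]].
  by rewrite inE => /andP[xC xFj]; rewrite /U (big_rem x) //= !inE jS xFj.
apply: leq_trans (subset_leq_card sub) _.
rewrite /U card_fset_sum1 big_distrl /=.
elim/big_ind2: _ => [|U1 n1 U2 n2 le1 le2|x _].
- by rewrite cards0.
- exact: leq_trans (leq_card_setU _ _) (leq_add le1 le2).
- by rewrite mul1n.
Qed.

Definition meets {T : choiceType} {I : Type} (B : I -> {fset T}) : rel I :=
  fun i j => B i `&` B j != fset0.

Lemma meets_neighbours_le {T : choiceType} {I : finType} {S : {set I}}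
    {B : I -> {fset T}} {s c} :
  {in S, forall i, #|` B i| <= s} -> (forall x, #|[set i in S | x \in B i]| <= c) ->
  {in S, forall v, #|neighbours (meets B) S v| <= (s * c).-1}.
Proof.
move=> card_B deg_x v vS.
have [Bv0|Bv_neq0] := eqVneq (B v) fset0.
  have -> : neighbours (meets B) S v = set0.
    by apply/setP => j; rewrite !inE /meets Bv0 fset0I fsetI0 eqxx !andbF.
  by rewrite cards0.
set X := [set j in S | B v `&` B j != fset0].
have vX : v \in X by rewrite inE vS fsetIid Bv_neq0.
have cardX : #|X| <= s * c.
  exact: leq_trans (card_meets_le S B (B v) c deg_x) (leq_mul (card_B v vS) (leqnn c)).
apply: (@leq_trans #|X :\ v|); last by move: cardX; rewrite (cardsD1 v X) vX; lia.
apply/subset_leq_card/subsetP => j; rewrite !inE /meets.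
by move=> /andP[jS /andP[-> /orP[]]]; rewrite jS //= fsetIC.
Qed.

Section CrossDisjoint.
Variables (T : choiceType) (I : finType) (A : I -> {fset T}) (a : nat).
Hypothesis card_A : forall i, #|` A i| <= a.

Definition cross_disjoint (B : I -> {fset T}) (J : {set I}) : Prop :=
  {in J &, forall i j, A i `&` B j = fset0}.

Lemma cross_disjoint_of_disjoint {B : I -> {fset T}} {D : {set I}} {t} :
  {in D &, forall i j, i != j -> B i `&` B j = fset0} ->
  {in D, forall i, A i `&` B i = fset0} ->
  t * (1 + 2 * a) <= #|D| ->
  exists J : {set I}, [/\ J \subset D, t <= #|J| & cross_disjoint B J].
Proof.
move=> disjB AB_D leD.
pose R i j := A i `&` B j != fset0.
have out_deg : {in D, forall i, #|[set j in D | R i j]| <= a}.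
  move=> i _; rewrite -[a]muln1.
  apply: leq_trans (card_meets_le D B (A i) 1 _) (leq_mul (card_A i) _) => // x.
  apply/card_le1_eqP => j1 j2; rewrite !inE => /andP[j1D xj1] /andP[j2D xj2].
  have [//|j12] := eqVneq j2 j1.
  by have := disjB _ _ j2D j1D j12 => /fsetP/(_ x); rewrite !inE xj1 xj2.
have [J [sJD indJ leDJ]] := degenerate_independent (out_degree_degenerate out_deg).
exists J; split => //.
  by rewrite -(@leq_pmul2r (1 + 2 * a)) // (leq_trans leD) // add1n.
move=> i j iJ jJ; have [<-|ij] := eqVneq i j; first exact: AB_D (subsetP sJD i iJ).
exact/eqP/negPn/indJ.
Qed.

Lemma cross_disjointD1 {B : I -> {fset T}} {J : {set I}} {x} :
  {in J, forall i, x \notin A i} -> cross_disjoint (fun j => B j `\ x) J ->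
  cross_disjoint B J.
Proof.
move=> xA cdJ i j iJ jJ; apply/fsetP => y; rewrite !inE.
have [->|yx] := eqVneq y x; first by rewrite (negbTE (xA i iJ)).
by have := cdJ i j iJ jJ => /fsetP/(_ y); rewrite !inE yx.
Qed.

Lemma cross_disjoint_of_sparse {B : I -> {fset T}} {S : {set I}} t {d} :
  {in S, forall v, #|neighbours (meets B) S v| <= d} ->
  {in S, forall i, A i `&` B i = fset0} ->
  (t * (1 + 2 * a) - 1) * d.+1 < #|S| ->
  exists J : {set I}, [/\ J \subset S, t <= #|J| & cross_disjoint B J].
Proof.
move=> degS AB_S ltS.
have [D [sDS indD leSD]] := degenerate_independent (bounded_degree_degenerate degS).
have disjD : {in D &, forall i j, i != j -> B i `&` B j = fset0}.
  by move=> i j iD jD /(indD i j iD jD)/negPn/eqP.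
have leD : t * (1 + 2 * a) <= #|D|.
  apply: leq_trans (leqSpred _) _; rewrite -subn1.
  by rewrite -(@ltn_pmul2r d.+1) // (leq_trans ltS).
have AB_D : {in D, forall i, A i `&` B i = fset0}.
  by move=> i /(subsetP sDS); apply: AB_S.
have [J [sJD leJ cdJ]] := cross_disjoint_of_disjoint disjD AB_D leD.
by exists J; split=> //; apply: subset_trans sJD sDS.
Qed.

Lemma cross_disjoint_large t b (S : {set I}) (B : I -> {fset T}) :
  {in S, forall i, #|` B i| <= b} -> {in S &, injective B} ->
  {in S, forall i, A i `&` B i = fset0} ->
  b`! * (t * (1 + 2 * a) - 1) ^ b < #|S| ->
  exists J : {set I}, [/\ J \subset S, t <= #|J| & cross_disjoint B J].
Proof.
set k := t * (1 + 2 * a) - 1.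
elim: b S B => [|b IH] S B card_B injB AB_S.
  rewrite fact0 expn0 mul1n => /card_gt1P[i [j [iS jS]]].
  have B0 l : l \in S -> B l = fset0.
    by move=> lS; apply/cardfs0_eq/eqP; rewrite -leqn0 card_B.
  by rewrite (injB i j iS jS) ?eqxx // (B0 i iS) (B0 j jS).
set c := b`! * k ^ b => ltS.
have [[x heavy]|light] := classic (exists x, c < #|[set i in S | x \in B i]|).
  set Sx := [set i in S | x \in B i] in heavy.
  have sSxS : Sx \subset S by apply/subsetP => i; rewrite inE => /andP[].
  have [|||J [sJSx leJ cdJ]] := IH Sx (fun i => B i `\ x) _ _ _ heavy.
  - move=> i; rewrite inE => /andP[iS xBi].
    by have := card_B i iS; rewrite (cardfsD1 x) xBi.
  - move=> i j; rewrite !inE => /andP[iS xBi] /andP[jS xBj] eqD.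
    by apply: injB; rewrite // -(fsetD1K xBi) -(fsetD1K xBj) eqD.
  - move=> i; rewrite inE => /andP[iS _]; apply/eqP.
    by rewrite -fsubset0 -(AB_S i iS) fsetIS // fsubsetDl.
  exists J; split=> //; first exact: subset_trans sJSx sSxS.
  apply: cross_disjointD1 cdJ => i /(subsetP sJSx); rewrite inE => /andP[iS xBi].
  by apply/negP => xAi; have := AB_S i iS => /fsetP/(_ x); rewrite !inE xAi xBi.
have {}light x : #|[set i in S | x \in B i]| <= c.
  by rewrite leqNgt; apply/negP => ?; apply: light; exists x.
apply: (cross_disjoint_of_sparse t (meets_neighbours_le card_B light) AB_S); rewrite -/k.
have [c0|c_gt0] := posnP c.
  have k0 : k = 0.
    by move/eqP: c0; rewrite muln_eq0 eqn0Ngt fact_gt0 expn_eq0 => /andP[/eqP].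
  by rewrite k0 mul0n (leq_ltn_trans (leq0n _) ltS).
rewrite prednK; last by rewrite muln_gt0 c_gt0.
by move: ltS; rewrite factS expnSr /c; nia.
Qed.

End CrossDisjoint.

Theorem lemma4p5 (T : choiceType) (a b t n : nat) (ht : 1 <= t)
  (A B : 'I_n -> {fset T})
  (hA : forall i, #|` A i| <= a)
  (hB : forall i, #|` B i| <= b)
  (hAB : forall i, A i `&` B i = fset0)
  (hBinj : forall i j, i != j -> B i != B j)
  (hn : b`! * (t * (1 + 2 * a) - 1) ^ b < n) :
  exists I : {set 'I_n}, #|I| = t /\
    forall i j, i \in I -> j \in I -> A i `&` B j = fset0.
Proof.
have injB : {in [set: 'I_n] &, injective B}.
  by move=> i j _ _; apply: contra_eq (hBinj i j).
have [|J [_ leJ cdJ]] :=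
  @cross_disjoint_large _ _ A a hA t b setT B (fun i _ => hB i) injB (fun i _ => hAB i).
  by rewrite cardsT card_ord.
have [I sIJ cardI] := ex_subset_card leJ.
by exists I; split=> // i j /(subsetP sIJ) iJ /(subsetP sIJ) jJ; apply: cdJ.
Qed.
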